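(* Let $\mathcal{I}$ be an interpreted system, $i$ an agent, $\phi$ any formula, and $S,T$ indexical sets of agents such that the formula $S\subseteq T$ is valid in $\mathcal{I}$. Then the formulas $B^T_i\phi\Rightarrow B^S_i\phi$, $C_T\phi\Rightarrow C_S\phi$ and $CB_T\phi\Rightarrow CB_S\phi$ are valid in $\mathcal{I}$.
   Context: Agents are $\mathrm{Agt}=\{1,\dots,n\}$. An interpreted system $\mathcal{I}=(\mathcal{R},\pi)$ consists of a set $\mathcal{R}$ of runs, each run $r$ being a function from times $m\in\mathbb{N}$ to global states $(s_e,s_1,\dots,s_n)$ (an environment state and a local state for each agent), and an interpretation $\pi$ assigning to each point a set of true atomic propositions; $r_i(m)$ denotes agent $i$'s local state. A point is a pair $(r,m)$. For an agent $i$, $(r,m)\sim_i(r',m')$ iff $r_i(m)=r'_i(m')$. Formulas are built from atomic propositions by boolean connectives and the operators below. $K_i\phi$ holds at $(r,m)$ iff $\phi$ holds at every point $(r',m')$ of $\mathcal{I}$ with $(r,m)\sim_i(r',m')$. An indexical set $S$ assigns to each point a set $S(r,m)\subseteq\mathrm{Agt}$; the atomic formula $i\in S$ holds at $(r,m)$ iff $i\in S(r,m)$, and $S\subseteq T$ holds at $(r,m)$ iff $S(r,m)\subseteq T(r,m)$. Define $B^S_i\phi:=K_i(i\in S\Rightarrow\phi)$; $E^B_S\phi:=\bigwedge_{i\in S}B^S_i\phi$ and $E_S\phi:=\bigwedge_{i\in S}K_i\phi$ (conjunctions over $i\in S(r,m)$ at the point of evaluation); common belief $CB_S\phi:=\bigwedge_{k\ge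 1}(E^B_S)^k\phi$ and common knowledge $C_S\phi:=\bigwedge_{k\ge1}E_S^k\phi$. A formula is valid in $\mathcal{I}$ if it holds at every point of $\mathcal{I}$. *)

From mathcomp Require Import all_boot.
Set Implicit Arguments. Unset Strict Implicit. Unset Printing Implicit Defensive.

Section Interpreted.

Variable n : nat.
Definition Agt := 'I_n.

Variable Env : Type.
Variable Loc : Agt -> Type.
Variable Atom : Type.

Definition GState := (Env * (forall i : Agt, Loc i))%type.

Definition Run := nat -> GState.

Definition loc (r : Run) (m : nat) (i : Agt) : Loc i := (r m).2 i.

Record isys := ISys {
  runs : Run -> Prop;
  interp : Run -> nat -> Atom -> Prop
}.

Definition indexical := Run -> nat -> Agt -> Prop.

Inductive form :=
| FAtom : Atom -> form
| FTrue : form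
| FNot : form -> form
| FAnd : form -> form -> form
| FOr : form -> form -> form
| FImp : form -> form -> form
| FIn : Agt -> indexical -> form
| FSub : indexical -> indexical -> form
| FK : Agt -> form -> form
| FE : indexical -> form -> form
| FEB : indexical -> form -> form
| FC : indexical -> form -> form
| FCB : indexical -> form -> form.

Definition FB (S : indexical) (i : Agt) (phi : form) : form :=
  FK i (FImp (FIn i S) phi).

Variable I : isys.

Definition Kop (i : Agt) (P : Run -> nat -> Prop) (r : Run) (m : nat) : Prop :=
  forall r' m', runs I r' -> loc r m i = loc r' m' i -> P r' m'.

Definition Eop (S : indexical) (P : Run -> nat -> Prop) (r : Run) (m : nat) : Prop :=
  forall i, S r m i -> Kop i P r m.

(* E^B_S: conjunction over i in S(r,m) of B^S_i = K_i (i \in S => .) *)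
Definition EBop (S : indexical) (P : Run -> nat -> Prop) (r : Run) (m : nat) : Prop :=
  forall i, S r m i -> Kop i (fun r' m' => S r' m' i -> P r' m') r m.

(* k-fold iteration: iter_op F k P = F^(k+1) P *)
Fixpoint iter_op (F : (Run -> nat -> Prop) -> Run -> nat -> Prop) (k : nat)
  (P : Run -> nat -> Prop) : Run -> nat -> Prop :=
  match k with
  | 0 => F P
  | k'.+1 => F (iter_op F k' P)
  end.

Fixpoint sat (phi : form) (r : Run) (m : nat) : Prop :=
  match phi with
  | FAtom p => interp I r m p
  | FTrue => True
  | FNot a => ~ sat a r m
  | FAnd a b => sat a r m /\ sat b r m
  | FOr a b => sat a r m \/ sat b r m
  | FImp a b => sat a r m -> sat b r m
  | FIn i X => X r m i
  | FSub X Y => forall i, X r m i -> Y r m i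
  | FK i a => Kop i (sat a) r m
  | FE X a => Eop X (sat a) r m
  | FEB X a => EBop X (sat a) r m
  | FC X a => forall k, iter_op (Eop X) k (sat a) r m
  | FCB X a => forall k, iter_op (EBop X) k (sat a) r m
  end.

Definition valid (phi : form) : Prop := forall r m, runs I r -> sat phi r m.

End Interpreted.

Arguments FAtom {n Env Loc Atom}. Arguments FTrue {n Env Loc Atom}.
Arguments FNot {n Env Loc Atom}. Arguments FAnd {n Env Loc Atom}.
Arguments FOr {n Env Loc Atom}. Arguments FImp {n Env Loc Atom}.
Arguments FIn {n Env Loc Atom}. Arguments FSub {n Env Loc Atom}.
Arguments FK {n Env Loc Atom}. Arguments FE {n Env Loc Atom}.
Arguments FEB {n Env Loc Atom}. Arguments FC {n Env Loc Atom}.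
Arguments FCB {n Env Loc Atom}. Arguments FB {n Env Loc Atom}.
Arguments valid {n Env Loc Atom}.

From mathcomp Require Import all_boot.

Set Implicit Arguments. Unset Strict Implicit. Unset Printing Implicit Defensive.

(* Every operator involved is monotone in its predicate argument and antitone in
   the indexical set, as long as inclusions are only required at points of runs
   of the system: the knowledge operator quantifies over such points only, so
   monotonicity propagates through any number of iterations. *)

Section Monotonicity.

Variables (n : nat) (Env : Type) (Loc : Agt n -> Type) (Atom : Type).
Variable I : isys Env Loc Atom.

Definition entails (P Q : Run Env Loc -> nat -> Prop) : Prop :=
  forall r m, runs I r -> P r m -> Q r m.

Definition subset_on_runs (S T : indexical Env Loc) : Prop :=
  forall r m i, runs I r -> S r m i -> T r m i.

Lemma entails_refl P : entails P P.
Proof. by []. Qed.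

Lemma Kop_entails i P Q r m : entails P Q -> Kop I i P r m -> Kop I i Q r m.
Proof. by move=> PQ KP r' m' r'R eq_loc; apply/PQ/KP. Qed.

Lemma Eop_entails S T P Q : subset_on_runs S T -> entails P Q ->
  entails (Eop I T P) (Eop I S Q).
Proof. by move=> ST PQ r m rR ETP i Si; apply/(Kop_entails PQ)/ETP/ST. Qed.

Lemma EBop_entails S T P Q : subset_on_runs S T -> entails P Q ->
  entails (EBop I T P) (EBop I S Q).
Proof.
move=> ST PQ r m rR ETP i Si; apply: Kop_entails (ETP i (ST _ _ _ rR Si)).
by move=> r' m' r'R TP S'i; apply/PQ/TP/ST.
Qed.

Lemma iter_op_entails F G :
  (forall P Q, entails P Q -> entails (F P) (G Q)) ->
  forall k P, entails (iter_op F k P) (iter_op G k P).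
Proof.
by move=> FG; elim=> [|k IHk] P /=; apply/FG; [apply: entails_refl | apply: IHk].
Qed.

Lemma iter_Eop_entails S T k P : subset_on_runs S T ->
  entails (iter_op (Eop I T) k P) (iter_op (Eop I S) k P).
Proof. by move=> ST; apply: iter_op_entails => Q R; apply: Eop_entails. Qed.

Lemma iter_EBop_entails S T k P : subset_on_runs S T ->
  entails (iter_op (EBop I T) k P) (iter_op (EBop I S) k P).
Proof. by move=> ST; apply: iter_op_entails => Q R; apply: EBop_entails. Qed.

End Monotonicity.

Theorem proposition1 (n : nat) (Env : Type) (Loc : Agt n -> Type) (Atom : Type)
  (I : isys Env Loc Atom) (i : Agt n) (phi : form Env Loc Atom)
  (S0 T0 : indexical Env Loc) :
  valid I (FSub S0 T0) ->
  valid I (FImp (FB T0 i phi) (FB S0 i phi)) /\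
  valid I (FImp (FC T0 phi) (FC S0 phi)) /\
  valid I (FImp (FCB T0 phi) (FCB S0 phi)).
Proof.
move=> validST.
have ST : subset_on_runs I S0 T0 by move=> r m j rR; apply: validST.
split; [|split] => r m rR /=.
- by apply: Kop_entails => r' m' r'R TP S'i; apply/TP/ST.
- by move=> CT k; apply: iter_Eop_entails (CT k).
- by move=> CBT k; apply: iter_EBop_entails (CBT k).
Qed.
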